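(* Suppose $\Sigma$ contains at least two propositional variables. There exists an AGM contraction operator for epistemic states $\div$, together with a faithful assignment $\Psi\mapsto\le_\Psi$ satisfying $[\![\Psi\div\alpha]\!]=[\![\Psi]\!]\cup\min([\![\neg\alpha]\!],\le_\Psi)$ for all $\Psi,\alpha$ and satisfying (CR9): for all $\Psi,\alpha$ and worlds $\omega_1,\omega_2\in[\![\neg\alpha]\!]$, $\omega_1\le_\Psi\omega_2 \Leftrightarrow \omega_1\le_{\Psi\div\alpha}\omega_2$, such that $\div$ violates (C9′): ''for all $\Psi,\alpha,\beta$, if $\alpha\models\beta$ then $\mathrm{Bel}(\Psi\div\alpha\div\beta) =_{\neg\alpha} \mathrm{Bel}(\Psi\div\beta)$''.
   Context: $\Sigma$ is a nonempty finite set of propositional variables, $\mathcal{L}$ the propositional language over $\Sigma$, $\Omega$ the set of worlds. $[\![\alpha]\!]$ is the set of models of $\alpha$; for a set $X$ of formulas $[\![X]\!]$ is the set of worlds satisfying all of $X$; $Cn(X)=\{\beta\mid X\models\beta\}$. $\mathcal{E}$ is a set of epistemic states; each $\Psi\in\mathcal{E}$ has a deductively closed belief set $\mathrm{Bel}(\Psi)\subseteq\mathcal{L}$; $\Psi\models\alpha$ iff $\alpha\in\mathrm{Bel}(\Psi)$; $[\![\Psi]\!]=[\![\mathrm{Bel}(\Psi)]\!]$. A belief change operator is a map $\div:\mathcal{E}\times\mathcal{L}\to\mathcal{E}$; $\Psi\div\alpha\div\beta$ means $(\Psi\div\alpha)\div\beta$. An AGM contraction operator for epistemic states is a belief change operator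 satisfying for all $\Psi,\alpha,\beta$: (C1) $\mathrm{Bel}(\Psi\div\alpha)\subseteq\mathrm{Bel}(\Psi)$; (C2) if $\alpha\notin\mathrm{Bel}(\Psi)$ then $\mathrm{Bel}(\Psi)\subseteq\mathrm{Bel}(\Psi\div\alpha)$; (C3) if $\alpha\not\equiv\top$ then $\alpha\notin\mathrm{Bel}(\Psi\div\alpha)$; (C4) $\mathrm{Bel}(\Psi)\subseteq Cn(\mathrm{Bel}(\Psi\div\alpha)\cup\{\alpha\})$; (C5) if $\alpha\equiv\beta$ then $\mathrm{Bel}(\Psi\div\alpha)=\mathrm{Bel}(\Psi\div\beta)$; (C6) $\mathrm{Bel}(\Psi\div\alpha)\cap\mathrm{Bel}(\Psi\div\beta)\subseteq\mathrm{Bel}(\Psi\div(\alpha\land\beta))$; (C7) if $\beta\notin\mathrm{Bel}(\Psi\div(\alpha\land\beta))$ then $\mathrm{Bel}(\Psi\div(\alpha\land\beta))\subseteq\mathrm{Bel}(\Psi\div\beta)$. For a total preorder $\le$ on $\Omega$ and $\Omega'\subseteq\Omega$, $\min(\Omega',\le)=\{\omega\in\Omega'\mid \omega\le\omega' \text{ for all }\omega'\in\Omega'\}$; $<$ is the strict part and $\simeq$ the induced equivalence. A faithful assignment maps each $\Psi$ to a total preorder $\le_\Psi$ on $\Omega$ with (FA1) $\omega_1,\omega_2\in[\![\Psi]\!]\Rightarrow\omega_1\simeq_\Psi\omega_2$ and (FA2) $\omega_1\in[\![\Psi]\!],\omega_2\notin[\![\Psi]\!]\Rightarrow\omega_1<_\Psi\omega_2$.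 $\alpha$-equivalence: for $\Omega_1,\Omega_2\subseteq\Omega$, $\Omega_1=_\alpha\Omega_2$ iff $\Omega_1\cap[\![\alpha]\!]=\Omega_2\cap[\![\alpha]\!]$; for sets of formulas $X=_\alpha Y$ iff $[\![X]\!]=_\alpha[\![Y]\!]$. *)

From mathcomp Require Import all_boot.
Set Implicit Arguments. Unset Strict Implicit. Unset Printing Implicit Defensive.

Inductive form (V : Type) : Type :=
| FVar : V -> form V
| FTop : form V
| FBot : form V
| FNeg : form V -> form V
| FAnd : form V -> form V -> form V
| FOr  : form V -> form V -> form V
| FImp : form V -> form V -> form V.
Arguments FTop {V}. Arguments FBot {V}.

Definition world (V : finType) := {ffun V -> bool}.

Fixpoint sat (V : finType) (w : world V) (a : form V) : Prop :=
  match a with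
  | FVar v => w v = true
  | FTop => True
  | FBot => False
  | FNeg b => ~ sat w b
  | FAnd b c => sat w b /\ sat w c
  | FOr b c => sat w b \/ sat w c
  | FImp b c => sat w b -> sat w c
  end.

Definition modsS (V : finType) (X : form V -> Prop) (w : world V) : Prop :=
  forall g, X g -> sat w g.

Definition entailsS (V : finType) (X : form V -> Prop) (b : form V) : Prop :=
  forall w, modsS X w -> sat w b.

Definition deductively_closed (V : finType) (X : form V -> Prop) : Prop :=
  forall b, entailsS X b -> X b.

Definition equiv (V : finType) (a b : form V) : Prop :=
  forall w, sat w a <-> sat w b.

Definition valid (V : finType) (a : form V) : Prop := forall w, sat w a.

Definition fentails (V : finType) (a b : form V) : Prop :=
  forall w, sat w a -> sat w b.

Definition AGM_contraction (V : finType) (E : Type) (Bel : E -> form V -> Prop)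
  (contr : E -> form V -> E) : Prop :=
  (forall P a g, Bel (contr P a) g -> Bel P g) /\
  (forall P a, ~ Bel P a -> forall g, Bel P g -> Bel (contr P a) g) /\
  (forall P a, ~ valid a -> ~ Bel (contr P a) a) /\
  (forall P a g, Bel P g ->
              entailsS (fun d => Bel (contr P a) d \/ d = a) g) /\
  (forall P a b, equiv a b ->
              forall g, Bel (contr P a) g <-> Bel (contr P b) g) /\
  (forall P a b g, Bel (contr P a) g -> Bel (contr P b) g ->
              Bel (contr P (FAnd a b)) g) /\
  (forall P a b, ~ Bel (contr P (FAnd a b)) b ->
              forall g, Bel (contr P (FAnd a b)) g -> Bel (contr P b) g).

Definition total_preorder (T : Type) (le : T -> T -> Prop) : Prop :=
  (forall x y z, le x y -> le y z -> le x z) /\ (forall x y, le x y \/ le y x).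

Definition faithful_assignment (V : finType) (E : Type) (Bel : E -> form V -> Prop)
  (le : E -> world V -> world V -> Prop) : Prop :=
  forall P, total_preorder (le P) /\
    (forall w1 w2, modsS (Bel P) w1 -> modsS (Bel P) w2 ->
                 le P w1 w2 /\ le P w2 w1) /\
    (forall w1 w2, modsS (Bel P) w1 -> ~ modsS (Bel P) w2 ->
                 le P w1 w2 /\ ~ le P w2 w1).

Definition is_min (T : Type) (O : T -> Prop) (le : T -> T -> Prop) (w : T) : Prop :=
  O w /\ forall w', O w' -> le w w'.

Definition eq_on (V : finType) (a : form V) (X Y : form V -> Prop) : Prop :=
  forall w, sat w a -> (modsS X w <-> modsS Y w).

Definition C9' (V : finType) (E : Type) (Bel : E -> form V -> Prop)
  (contr : E -> form V -> E) : Prop :=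
  forall P a b, fentails a b ->
    eq_on (FNeg a) (Bel (contr (contr P a) b)) (Bel (contr P b)).

Definition CR9 (V : finType) (E : Type) (contr : E -> form V -> E)
  (le : E -> world V -> world V -> Prop) : Prop :=
  forall P a w1 w2, sat w1 (FNeg a) -> sat w2 (FNeg a) ->
    (le P w1 w2 <-> le (contr P a) w1 w2).

(** Epistemic states are total preorders on worlds, believing exactly what holds
    in their minimal worlds, and contracting by [a] moves the minimal worlds of
    [~ a] to the bottom while leaving the rest of the order untouched.  This
    satisfies (C1)-(C7) and (CR9), but (C9') already fails for [b = True]:
    contracting by [True] changes nothing, so [Bel(P / a / True)] keeps the
    [~ a]-worlds that [P / a] added, whereas [Bel(P / True) = Bel(P)] excludes
    them.  Two distinct worlds suffice, so one variable would already do. *)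

From Stdlib Require Import Classical.
From Pilot Require Import Defs.
From mathcomp Require Import all_boot.

Set Implicit Arguments.
Unset Strict Implicit.
Unset Printing Implicit Defensive.

Section Preorders.

Variable T : Type.
Implicit Types (R : T -> T -> Prop) (X O : T -> Prop).

Definition bottom R (w : T) : Prop := forall w', R w w'.

Definition lift X R : T -> T -> Prop := fun w1 w2 => X w1 \/ (~ X w2 /\ R w1 w2).

Lemma lift_total X R : total_preorder R -> total_preorder (lift X R).
Proof.
move=> [R_trans R_total]; split.
- move=> x y z [Xx | [nXy Rxy]] [Xy | [nXz Ryz]]; try by [left | ].
  by right; split; last exact: R_trans Rxy Ryz.
- move=> x y; have [Xx | nXx] := classic (X x); first by do 2 left.
  have [Xy | nXy] := classic (X y); first by right; left.
  by case: (R_total x y) => ?; [left | right]; right.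
Qed.

Lemma bottom_lift X R w :
  (forall u, bottom R u -> X u) -> bottom (lift X R) w <-> X w.
Proof.
move=> bottom_X; split=> [w_bot | Xw w']; last by left.
apply: NNPP => nXw; apply/nXw/bottom_X => w'.
by case: (w_bot w') => [// | [_ ?]].
Qed.

Lemma is_min_ext O1 O2 R w :
  (forall u, O1 u <-> O2 u) -> is_min O1 R w -> is_min O2 R w.
Proof. by move=> eqO [/eqO O2w w_min]; split=> // u /eqO; apply: w_min. Qed.

Lemma is_min_bottom O R s m :
  total_preorder R -> bottom R s -> O s -> is_min O R m -> bottom R m.
Proof. by move=> [R_trans _] s_bot Os [_ m_min] w; exact: R_trans (m_min s Os) (s_bot w). Qed.

End Preorders.

Lemma is_min_exists (T : finType) (R : T -> T -> Prop) (O : T -> Prop) :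
  total_preorder R -> (exists x, O x) -> exists m, is_min O R m.
Proof.
move=> [R_trans R_total] [x Ox].
have R_refl y : R y y by case: (R_total y y).
have min_in (s : seq T) : (forall y, y \in s -> ~ O y) \/
                exists m, O m /\ forall y, y \in s -> O y -> R m y.
  elim: s => [|z s [none_s | [m [Om m_min]]]]; first by left.
  - have [Oz | nOz] := classic (O z).
      right; exists z; split=> // y; rewrite in_cons => /orP[/eqP-> // | ys] Oy.
      by case: (none_s y ys Oy).
    by left=> y; rewrite in_cons => /orP[/eqP-> // | ]; apply: none_s.
  - right; have [Oz | nOz] := classic (O z); last first.
      exists m; split=> // y; rewrite in_cons => /orP[/eqP-> // | ]; apply: m_min.
    have [Rzm | Rmz] := R_total z m.
      exists z; split=> // y; rewrite in_cons => /orP[/eqP-> // | ys Oy].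
      exact: R_trans Rzm (m_min y ys Oy).
    exists m; split=> // y; rewrite in_cons => /orP[/eqP-> // | ]; apply: m_min.
case: (min_in (enum T)) => [none | [m [Om m_min]]].
  by case: (none x); rewrite ?mem_enum.
by exists m; split=> // y; apply: m_min; rewrite mem_enum.
Qed.

Section Semantics.

Variable V : finType.
Implicit Types (X : world V -> Prop) (a b g : form V) (u w : world V).

Definition theory X g : Prop := forall w, X w -> sat w g.

Lemma not_theory X g : ~ theory X g -> exists2 w, X w & ~ sat w g.
Proof.
move=> ng; apply: NNPP => no_w; apply: ng => w Xw.
by apply: NNPP => nw; apply: no_w; exists w.
Qed.

Lemma theory_closed X : deductively_closed (theory X).
Proof. by move=> g X_g w Xw; apply: X_g => f; apply. Qed.

Definition literal w (v : V) : form V := if w v then FVar v else FNeg (FVar v).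

Definition char_form w : form V :=
  foldr (fun v f => FAnd (literal w v) f) FTop (enum V).

Lemma sat_char_form u w : sat u (char_form w) <-> u = w.
Proof.
have sat_literal v : sat u (literal w v) <-> u v = w v.
  by rewrite /literal; case: (w v) => /=; case: (u v).
have sat_literals (s : seq V) :
    sat u (foldr (fun v f => FAnd (literal w v) f) FTop s) <->
    forall v, v \in s -> u v = w v.
  elim: s => [|v s IH] /=; first by [].
  split=> [[/sat_literal uv /IH us] y | agree].
    by rewrite in_cons => /orP[/eqP-> // | ]; apply: us.
  split; first by apply/sat_literal/agree; rewrite mem_head.
  by apply/IH => y ys; apply: agree; rewrite in_cons ys orbT.
rewrite sat_literals; split=> [agree | -> //].
by apply/ffunP => v; apply: agree; rewrite mem_enum.
Qed.

Lemma mods_theory X w : modsS (theory X) w <-> X w.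
Proof.
split=> [w_mod | Xw g]; last by apply.
apply: NNPP => nXw; have /w_mod : theory X (FNeg (char_form w)).
  by move=> u Xu /sat_char_form uw; rewrite uw in Xu.
by apply; apply/sat_char_form.
Qed.

End Semantics.

Section Contraction.

Variable V : finType.
Implicit Types (a b g : form V) (u w : world V) (R : world V -> world V -> Prop).

Definition state := {R : world V -> world V -> Prop | total_preorder R}.
Implicit Type P : state.

Definition Bel P : form V -> Prop := theory (bottom (sval P)).

Definition min_neg R a : world V -> Prop := is_min (fun u => sat u (FNeg a)) R.

Definition contr_worlds R a w : Prop := bottom R w \/ min_neg R a w.

Definition contr P a : state :=
  exist _ (lift (contr_worlds (sval P) a) (sval P)) (lift_total _ (svalP P)).

Lemma mods_Bel P w : modsS (Bel P) w <-> bottom (sval P) w.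
Proof. exact: mods_theory. Qed.

Lemma bottom_contr P a w : bottom (sval (contr P a)) w <-> contr_worlds (sval P) a w.
Proof. by apply: bottom_lift => u; left. Qed.

Lemma Bel_contr P a g : Bel (contr P a) g <-> theory (contr_worlds (sval P) a) g.
Proof. by split=> Hg w /bottom_contr; apply: Hg. Qed.

Lemma mods_Bel_contr P a w :
  modsS (Bel (contr P a)) w <-> modsS (Bel P) w \/ min_neg (sval P) a w.
Proof. by rewrite mods_Bel bottom_contr mods_Bel. Qed.

Section MinNeg.

Variable R : world V -> world V -> Prop.
Hypothesis R_total : total_preorder R.

Lemma min_neg_exists a : ~ valid a -> exists m, min_neg R a m.
Proof. by move=> /not_all_ex_not [w naw]; apply: is_min_exists R_total _; exists w. Qed.

Lemma min_neg_equiv a b w : Defs.equiv a b -> min_neg R a w -> min_neg R b w.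
Proof. by move=> ab; apply: is_min_ext => u /=; rewrite (ab u). Qed.

Lemma min_neg_and a b w :
  min_neg R (FAnd a b) w -> min_neg R a w \/ min_neg R b w.
Proof.
move=> [/= nabw w_min]; have [aw | naw] := classic (sat w a).
  right; split=> [bw | u nbu]; first exact: nabw.
  by apply: w_min => -[_ /nbu].
by left; split=> // u nau; apply: w_min => -[/nau].
Qed.

Lemma min_neg_and_sub a b w m :
  min_neg R (FAnd a b) w -> ~ sat w b -> min_neg R b m -> min_neg R (FAnd a b) m.
Proof.
move=> [_ w_min] nbw [nbm m_min]; split=> [[_ /nbm] // | u nabu].
exact: (proj1 R_total) (m_min w nbw) (w_min u nabu).
Qed.

End MinNeg.

Lemma contr_inclusion P a g : Bel (contr P a) g -> Bel P g.
Proof. by move=> /Bel_contr Hg w w_bot; apply: Hg; left. Qed.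

Lemma contr_vacuity P a : ~ Bel P a -> forall g, Bel P g -> Bel (contr P a) g.
Proof.
move=> /not_theory [s s_bot nas] g Pg.
apply/Bel_contr => w [w_bot | w_min]; apply: Pg => //.
exact: is_min_bottom (svalP P) s_bot nas w_min.
Qed.

Lemma contr_success P a : ~ valid a -> ~ Bel (contr P a) a.
Proof.
move=> /(min_neg_exists (svalP P)) [m m_min] /Bel_contr Ha.
exact: (proj1 m_min) (Ha m (or_intror m_min)).
Qed.

Lemma contr_recovery P a g :
  Bel P g -> entailsS (fun d => Bel (contr P a) d \/ d = a) g.
Proof.
move=> Pg w w_mod; have aw : sat w a by apply: w_mod; right.
have : modsS (Bel (contr P a)) w by move=> d Cd; apply: w_mod; left.
by case/mods_Bel_contr => [/mods_Bel /Pg | [/= /(_ aw)]].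
Qed.

Lemma contr_extensionality P a b :
  Defs.equiv a b -> forall g, Bel (contr P a) g <-> Bel (contr P b) g.
Proof.
suff sub a' b' : Defs.equiv a' b' -> forall g, Bel (contr P a') g -> Bel (contr P b') g.
  by move=> ab g; split; apply: sub => // u; apply: iff_sym.
move=> ab g /Bel_contr Hg; apply/Bel_contr => w [w_bot | w_min]; apply: Hg.
  by left.
by right; apply: min_neg_equiv w_min => u; apply: iff_sym.
Qed.

Lemma contr_conj_overlap P a b g :
  Bel (contr P a) g -> Bel (contr P b) g -> Bel (contr P (FAnd a b)) g.
Proof.
move=> /Bel_contr Ha /Bel_contr Hb.
apply/Bel_contr => w [w_bot | /min_neg_and [wa | wb]].
- by apply: Ha; left.
- by apply: Ha; right.
- by apply: Hb; right.
Qed.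

Lemma contr_conj_inclusion P a b :
  ~ Bel (contr P (FAnd a b)) b ->
  forall g, Bel (contr P (FAnd a b)) g -> Bel (contr P b) g.
Proof.
move=> /not_theory [w /bottom_contr w_con nbw] g /Bel_contr Hg.
apply/Bel_contr => m [m_bot | m_min]; apply: Hg; first by left.
case: w_con => [w_bot | w_min]; first by left; exact: is_min_bottom (svalP P) w_bot nbw m_min.
by right; apply: (min_neg_and_sub (svalP P) w_min nbw m_min).
Qed.

Lemma contr_AGM : AGM_contraction Bel contr.
Proof.
split; first exact: contr_inclusion.
split; first exact: contr_vacuity.
split; first exact: contr_success.
split; first exact: contr_recovery.
split; first exact: contr_extensionality.
split; first exact: contr_conj_overlap.
exact: contr_conj_inclusion.
Qed.

Lemma bottom_faithful : faithful_assignment Bel sval.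
Proof.
move=> P; have [R_trans _] := svalP P; split; first exact: svalP.
split=> w1 w2 /mods_Bel w1_bot; first by move=> /mods_Bel w2_bot; split.
move=> w2_nmod; split=> // R21; apply/w2_nmod/mods_Bel => w.
exact: R_trans R21 (w1_bot w).
Qed.

Lemma contr_CR9 : CR9 contr sval.
Proof.
move=> P a w1 w2 nw1 nw2 /=; have [R_trans _] := svalP P.
split=> [R12 | [[w1_bot | [_ w1_min]] | [_ //]]]; [ | exact: w1_bot | exact: w1_min].
have [w2_con | ] := classic (contr_worlds (sval P) a w2); last by right.
left; case: w2_con => [w2_bot | [_ w2_min]].
  by left=> w; exact: R_trans R12 (w2_bot w).
by right; split=> // u nu; exact: R_trans R12 (w2_min u nu).
Qed.

Lemma contr_top P w : modsS (Bel (contr P FTop)) w <-> modsS (Bel P) w.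
Proof. by rewrite mods_Bel_contr; split=> [[// | [/(_ I)]] | ]; [ | left]. Qed.

Lemma new_min_neg_not_C9' P a w :
  min_neg (sval P) a w -> ~ bottom (sval P) w -> ~ C9' Bel contr.
Proof.
move=> w_min nw_bot C9; apply/nw_bot/mods_Bel/contr_top.
apply/(C9 P a FTop (fun _ _ => I) w (proj1 w_min)).
by apply/contr_top/mods_Bel_contr; right.
Qed.

Definition pointed w0 : world V -> world V -> Prop := fun x y => x = w0 \/ y <> w0.

Lemma pointed_total w0 : total_preorder (pointed w0).
Proof.
split=> [x y z [xw | yw] [yw' | zw] | x y]; try by [left | right].
by have [-> | xw] := classic (x = w0); [left; left | right; right].
Qed.

Lemma bottom_pointed w0 w : bottom (pointed w0) w <-> w = w0.
Proof. by split=> [w_bot | -> w']; [case: (w_bot w0) => // /(_ erefl) | left]. Qed.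

Lemma min_neg_pointed w0 w : w <> w0 -> min_neg (pointed w0) (char_form w0) w.
Proof.
move=> ww0; split=> [/sat_char_form /ww0 // | u nu]; right=> uw.
by apply: nu; rewrite uw; apply/sat_char_form.
Qed.

Lemma contr_not_C9' : 0 < #|V| -> ~ C9' Bel contr.
Proof.
move=> /card_gt0P [v _].
pose w0 : world V := [ffun _ => false]; pose w1 : world V := [ffun _ => true].
have w10 : w1 <> w0 by move=> /(congr1 (fun f : world V => f v)); rewrite !ffunE.
apply: (@new_min_neg_not_C9' (exist _ _ (pointed_total w0)) _ _ (min_neg_pointed w10)).
by move=> /bottom_pointed.
Qed.

End Contraction.

Theorem mainTheorem5 (V : finType) (hV : 1 < #|V|) :
  exists (E : Type) (Bel : E -> form V -> Prop) (contr : E -> form V -> E)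
         (le : E -> world V -> world V -> Prop),
    (forall P, deductively_closed (Bel P)) /\
    AGM_contraction Bel contr /\
    faithful_assignment Bel le /\
    (forall P a w, modsS (Bel (contr P a)) w <->
                   modsS (Bel P) w \/ is_min (fun u => sat u (FNeg a)) (le P) w) /\
    CR9 contr le /\
    ~ C9' Bel contr.
Proof.
exists (state V), (@Bel V), (@contr V), sval.
split; first by move=> P; apply: theory_closed.
split; first exact: contr_AGM.
split; first exact: bottom_faithful.
split; first exact: mods_Bel_contr.
split; first exact: contr_CR9.
by apply: contr_not_C9'; apply: ltnW.
Qed.
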